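(* Let $G$ be an optimal digraph with $\beta_G > \alpha_G$. For every augmenting sequence $v_1, f_1, v_2, f_2, \dots, f_k, v_{k+1}$ in $G$, we have $v_i \neq v_j$ for all $i \neq j$, except possibly $v_{k+1} = v_1$.
   Context: Digraphs are finite, loopless, with at most one edge $uv$ per ordered pair. A digraph is $2$-free if no distinct $u,v$ have both $uv,vu$ as edges. A circular interval digraph is a digraph together with a fixed arrangement of its vertices in a circle such that for all distinct $u,v,w$ in clockwise order with $uw\in E(G)$, also $uv,vw\in E(G)$. For distinct $u,v$, $d(u,v) = 1 + |\{w: u,w,v \text{ distinct, in clockwise order}\}|$; this is the length of the ordered pair $uv$. A non-edge is an ordered pair $(u,v)$ of distinct vertices with neither $uv$ nor $vu$ an edge; its length is $d(u,v)$. $\alpha_G$ is the minimum length of a non-edge ($\infty$ if none) and $\beta_G$ the maximum length of an edge ($0$ if none). A longest edge is an edge of length $\beta_G$; a shortest non-edge is a non-edge of length $\alpha_G$; an extreme pair is a longest edge or a shortest non-edge. An alternating sequence is a sequence $v_1,f_1,v_2,\dots,f_k,v_{k+1}$ ($k\ge1$) of vertices $v_i$ and extreme pairs $f_i=(v_i,v_{i+1})$ such that the $f_i$ are pairwise distinct, and for $1\le i\le k-1$, if $f_i$ is an edge then $f_{i+1}$ is a non-edge, and if $f_i$ is a non-edge then $f_{i+1}$ is an edge. An augmenting sequence is a maximal alternating sequence (one that cannot be extended at either end to a longer alternating sequence). $\xi(G)$ is the number of pairs $(uv,(w,x))$ with $uv\in E(G)$, $(w,x)$ a non-edge, $d(u,v)>d(w,x)$.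 $\tilde P_3(G)$ is the number of triples $(a,b,c)$ of distinct vertices with $ab,bc\in E(G)$ and $ac,ca\notin E(G)$. For fixed $n\ge 4$, $G$ is optimal if it is a $2$-free circular interval digraph on $n$ vertices maximizing $\tilde P_3$ among all such digraphs and, subject to this, minimizing $\xi(G)$. *)

From mathcomp Require Import all_boot.
Set Implicit Arguments. Unset Strict Implicit. Unset Printing Implicit Defensive.

(* Vertices are 'I_n, arranged in the circle in the order 0,1,...,n-1
   (clockwise = increasing index mod n).  A digraph is a relation E. *)

(* d(u,v) = 1 + #{w : u,w,v distinct in clockwise order} = (v - u) mod n *)
Definition dist (n : nat) (u v : 'I_n) : nat := (v + n - u) %% n.

Definition loopless (n : nat) (E : rel 'I_n) : Prop := forall u, ~~ E u u.

Definition two_free (n : nat) (E : rel 'I_n) : Prop :=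
  forall u v, u != v -> ~~ (E u v && E v u).

(* u, v, w distinct and in clockwise order  <->  d(u,v) < d(u,w) *)
Definition cw_order (n : nat) (u v w : 'I_n) : bool :=
  [&& u != v, v != w, u != w & dist u v < dist u w].

Definition circ_interval (n : nat) (E : rel 'I_n) : Prop :=
  forall u v w, cw_order u v w -> E u w -> E u v && E v w.

Definition is_cid (n : nat) (E : rel 'I_n) : Prop :=
  [/\ loopless E, two_free E & circ_interval E].

Definition nonedge (n : nat) (E : rel 'I_n) (u v : 'I_n) : bool :=
  [&& u != v, ~~ E u v & ~~ E v u].

(* maximum length of an edge, 0 if none *)
Definition beta (n : nat) (E : rel 'I_n) : nat :=
  \max_(p : 'I_n * 'I_n | E p.1 p.2) dist p.1 p.2.

(* minimum length of a non-edge; n plays the role of infinity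
   (every length is < n) *)
Definition alpha (n : nat) (E : rel 'I_n) : nat :=
  \big[minn/n]_(p : 'I_n * 'I_n | nonedge E p.1 p.2) dist p.1 p.2.

Definition longest_edge (n : nat) (E : rel 'I_n) (u v : 'I_n) : bool :=
  E u v && (dist u v == beta E).

Definition shortest_nonedge (n : nat) (E : rel 'I_n) (u v : 'I_n) : bool :=
  nonedge E u v && (dist u v == alpha E).

Definition extreme (n : nat) (E : rel 'I_n) (u v : 'I_n) : bool :=
  longest_edge E u v || shortest_nonedge E u v.

(* the pairs f_i = (v_i, v_{i+1}) of a vertex sequence *)
Definition seq_pairs (n : nat) (s : seq 'I_n) : seq ('I_n * 'I_n) :=
  zip s (behead s).

Definition alt_step (n : nat) (E : rel 'I_n) (p q : 'I_n * 'I_n) : bool :=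
  (E p.1 p.2 ==> nonedge E q.1 q.2) && (nonedge E p.1 p.2 ==> E q.1 q.2).

(* alternating sequence v_1, f_1, ..., f_k, v_{k+1} (k >= 1) given by
   its vertex list s = [v_1; ...; v_{k+1}]; [sorted r] checks r on every
   pair of consecutive items *)
Definition alternating (n : nat) (E : rel 'I_n) (s : seq 'I_n) : bool :=
  [&& 2 <= size s,
      all (fun p => extreme E p.1 p.2) (seq_pairs s),
      uniq (seq_pairs s) &
      sorted (alt_step E) (seq_pairs s)].

(* maximal alternating sequence: cannot be extended at either end *)
Definition augmenting (n : nat) (E : rel 'I_n) (s : seq 'I_n) : Prop :=
  [/\ alternating E s,
      (forall x, ~~ alternating E (x :: s)) &
      (forall x, ~~ alternating E (rcons s x))].

Definition P3t (n : nat) (E : rel 'I_n) : nat :=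
  #|[pred t : 'I_n * 'I_n * 'I_n |
      [&& t.1.1 != t.1.2, t.1.2 != t.2, t.1.1 != t.2,
          E t.1.1 t.1.2, E t.1.2 t.2, ~~ E t.1.1 t.2 & ~~ E t.2 t.1.1]]|.

Definition xi (n : nat) (E : rel 'I_n) : nat :=
  #|[pred q : ('I_n * 'I_n) * ('I_n * 'I_n) |
      [&& E q.1.1 q.1.2, nonedge E q.2.1 q.2.2 &
          dist q.2.1 q.2.2 < dist q.1.1 q.1.2]]|.

Definition optimal (n : nat) (E : rel 'I_n) : Prop :=
  [/\ is_cid E,
      (forall E' : rel 'I_n, is_cid E' -> P3t E' <= P3t E) &
      (forall E' : rel 'I_n, is_cid E' -> P3t E' = P3t E -> xi E <= xi E')].

From mathcomp Require Import all_boot zify.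
Set Implicit Arguments. Unset Strict Implicit. Unset Printing Implicit Defensive.

(* Key fact: in such a digraph an extreme pair is determined by its tail,
   and also by its head.  Two extreme pairs of the same kind have the same
   length, and a pair is determined by one endpoint and its length; an edge
   of length beta and a non-edge of length alpha < beta cannot share an
   endpoint, because the circular interval property makes every pair lying
   inside an edge and sharing its tail or head an edge too.  So if the
   consecutive pairs f_i of a sequence are distinct extreme pairs, a
   repetition v_i = v_j (i < j) gives the distinct pairs f_i, f_j a common
   tail (j not last) or f_(i-1), f_(j-1) a common head (i not first). *)

Lemma distE n (u v : 'I_n) : dist u v = if u <= v then v - u else v + n - u.
Proof.
rewrite /dist; have hu := ltn_ord u; have hv := ltn_ord v.
case: leqP => h.
  have -> : v + n - u = (v - u) + n by lia.
  by rewrite modnDr modn_small //; lia.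
by rewrite modn_small //; lia.
Qed.

Lemma dist_self n (u : 'I_n) : dist u u = 0.
Proof. by rewrite distE leqnn subnn. Qed.

Lemma dist_pos n (u v : 'I_n) : u != v -> 0 < dist u v.
Proof.
rewrite distE -(inj_eq val_inj) /=; have := ltn_ord u; have := ltn_ord v.
case: (leqP u v); lia.
Qed.

Lemma dist_inj_r n (u v w : 'I_n) : dist u v = dist u w -> v = w.
Proof.
rewrite !distE => h; apply: val_inj => /=.
have := ltn_ord u; have := ltn_ord v; have := ltn_ord w.
move: h; case: (leqP u v); case: (leqP u w); lia.
Qed.

Lemma dist_inj_l n (u v w : 'I_n) : dist u v = dist w v -> u = w.
Proof.
rewrite !distE => h; apply: val_inj => /=.
have := ltn_ord u; have := ltn_ord v; have := ltn_ord w.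
move: h; case: (leqP u v); case: (leqP w v); lia.
Qed.

Lemma dist_between n (u v y : 'I_n) :
  y != v -> dist y v < dist u v -> dist u y < dist u v.
Proof.
move=> /dist_pos; rewrite !distE.
have := ltn_ord u; have := ltn_ord v; have := ltn_ord y.
case: (leqP u v); case: (leqP y v); case: (leqP u y); lia.
Qed.

Section ExtremePairs.
Variables (n : nat) (E : rel 'I_n).
Hypothesis E_circ : circ_interval E.

Lemma no_nonedge_inside_tail (v w x : 'I_n) :
  E v w -> nonedge E v x -> dist v x < dist v w -> False.
Proof.
move=> Evw /and3P[vx nEvx _] hd.
have vw : v != w by apply/eqP => e; move: hd; rewrite e dist_self ltn0.
have xw : x != w by apply/eqP => e; move: hd; rewrite e ltnn.
have := E_circ (u := v) (v := x) (w := w).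
rewrite /cw_order vx xw vw hd => /(_ isT Evw) /andP[Evx _].
by rewrite Evx in nEvx.
Qed.

Lemma no_nonedge_inside_head (u v y : 'I_n) :
  E u v -> nonedge E y v -> dist y v < dist u v -> False.
Proof.
move=> Euv /and3P[yv nEyv _] hd.
have uy : u != y by apply/eqP => e; move: hd; rewrite e ltnn.
have uv : u != v by apply/eqP => e; move: hd; rewrite e dist_self ltn0.
have := E_circ (u := u) (v := y) (w := v).
rewrite /cw_order uy yv uv (dist_between yv hd) => /(_ isT Euv) /andP[_ Eyv].
by rewrite Eyv in nEyv.
Qed.

Hypothesis alpha_lt_beta : alpha E < beta E.

Lemma extreme_tail_inj (u v w : 'I_n) :
  extreme E u v -> extreme E u w -> v = w.
Proof.
rewrite /extreme /longest_edge /shortest_nonedge.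
case/orP=> [/andP[Euv /eqP dv] | /andP[Nuv /eqP dv]];
  case/orP=> [/andP[Euw /eqP dw] | /andP[Nuw /eqP dw]].
- by apply: (@dist_inj_r _ u); rewrite dv dw.
- by case: (no_nonedge_inside_tail Euv Nuw); rewrite dv dw.
- by case: (no_nonedge_inside_tail Euw Nuv); rewrite dv dw.
- by apply: (@dist_inj_r _ u); rewrite dv dw.
Qed.

Lemma extreme_head_inj (u v w : 'I_n) :
  extreme E u w -> extreme E v w -> u = v.
Proof.
rewrite /extreme /longest_edge /shortest_nonedge.
case/orP=> [/andP[Euw /eqP du] | /andP[Nuw /eqP du]];
  case/orP=> [/andP[Evw /eqP dv] | /andP[Nvw /eqP dv]].
- by apply: (@dist_inj_l _ _ w); rewrite du dv.
- by case: (no_nonedge_inside_head Euw Nvw); rewrite du dv.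
- by case: (no_nonedge_inside_head Evw Nuw); rewrite du dv.
- by apply: (@dist_inj_l _ _ w); rewrite du dv.
Qed.

End ExtremePairs.

Lemma nth_seq_pairs n (s : seq 'I_n) x0 t : t.+1 < size s ->
  nth (x0, x0) (seq_pairs s) t = (nth x0 s t, nth x0 s t.+1).
Proof.
move=> h; rewrite /seq_pairs nth_zip_cond size_zip size_behead.
have -> : t < minn (size s) (size s).-1 by lia.
by rewrite nth_behead.
Qed.

Lemma size_seq_pairs n (s : seq 'I_n) : size (seq_pairs s) = (size s).-1.
Proof. rewrite /seq_pairs size_zip size_behead; lia. Qed.

Section DistinctPairs.
Variables (n : nat) (R : rel 'I_n) (s : seq 'I_n) (x0 : 'I_n).
Hypothesis R_tail_inj : forall u v w, R u v -> R u w -> v = w.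
Hypothesis R_head_inj : forall u v w, R u w -> R v w -> u = v.
Hypothesis s_pairs_R : all (fun p => R p.1 p.2) (seq_pairs s).
Hypothesis s_pairs_uniq : uniq (seq_pairs s).
Local Notation "'sv[' t ']'" := (nth x0 s t) (at level 0).

Lemma distinct_pairs_endpoints a b : a < b -> b.+1 < size s ->
  sv[a] != sv[b] /\ sv[a.+1] != sv[b.+1].
Proof.
move=> ab bs.
have pair_R t : t.+1 < size s -> R sv[t] sv[t.+1].
  move=> ts; rewrite -[R _ _]/((fun p => R p.1 p.2) (sv[t], sv[t.+1])).
  rewrite -nth_seq_pairs //; apply: (allP s_pairs_R); apply: mem_nth.
  by rewrite size_seq_pairs; lia.
have pairs_neq : (sv[a], sv[a.+1]) != (sv[b], sv[b.+1]).
  rewrite -!nth_seq_pairs; try lia.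
  by rewrite nth_uniq ?size_seq_pairs; try lia.
have Ra := pair_R a (leq_ltn_trans ab (ltnW bs)); have Rb := pair_R b bs.
split; apply: contra_neq pairs_neq => e.
- by move: Rb; rewrite -e => /(R_tail_inj Ra) ->.
- by move: Rb; rewrite -e => /(R_head_inj Ra) ->.
Qed.

Lemma distinct_vertices i j : i < j < size s ->
  ~~ ((i == 0) && (j == (size s).-1)) -> sv[i] != sv[j].
Proof.
case/andP=> ij js not_ends.
case: (ltnP j.+1 (size s)) => [js1 | jlast].
  exact: (distinct_pairs_endpoints ij js1).1.
case: i ij not_ends => [|i] ij not_ends.
  by move: not_ends; rewrite eqxx /= => /eqP; lia.
have -> : j = j.-1.+1 by lia.
apply: (@distinct_pairs_endpoints i j.-1 _ _).2; lia.
Qed.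

End DistinctPairs.

Theorem mainTheorem13 (n : nat) (E : rel 'I_n) (s : seq 'I_n) :
  4 <= n -> optimal E -> alpha E < beta E -> augmenting E s ->
  forall (x0 : 'I_n) (i j : nat), i < j < size s ->
    ~~ ((i == 0) && (j == (size s).-1)) ->
    nth x0 s i != nth x0 s j.
Proof.
move=> _ [[_ _ E_circ] _ _] ab [/and4P[_ s_extreme s_uniq _] _ _] x0.
apply: distinct_vertices s_extreme s_uniq.
- exact: extreme_tail_inj.
- exact: extreme_head_inj.
Qed.
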